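(* Let $G$ be a finite group and suppose given integers $n(H,\phi)$ for all pairs $(H,\phi)$ with $H$ either a cyclic subgroup of $G$ or $H=G$, and $\phi$ a character of $H$, satisfying: (i) $n(H,\phi_1+\phi_2)=n(H,\phi_1)+n(H,\phi_2)$ for all characters $\phi_1,\phi_2$ of such $H$; (ii) $n(G,\mathrm{Ind}_H^G\phi)=n(H,\phi)$ for every cyclic subgroup $H$ and every character $\phi$ of $H$; (iii) $n(H,\phi)\ge0$ for every cyclic subgroup $H$ and every character $\phi$ of $H$. Then \[\sum_{\chi\in\mathrm{Irr}(G)}n(G,\chi)^2\le n(G,\mathrm{Reg}_G)^2.\]
   Context: $\mathrm{Irr}(G)$ is the set of irreducible complex characters of $G$, and $\mathrm{Reg}_G=\sum_{\chi\in\mathrm{Irr}(G)}\chi(1)\chi$ is the regular character. $\mathrm{Ind}_H^G$ denotes induction of characters. *)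

From HB Require Import structures.
From mathcomp Require Import all_boot all_order all_algebra all_fingroup all_solvable all_field all_character.
Set Implicit Arguments.
Unset Strict Implicit.
Unset Printing Implicit Defensive.

From HB Require Import structures.
From mathcomp Require Import all_boot all_order all_algebra all_fingroup all_solvable all_field all_character.
Import Order.TTheory GRing.Theory Num.Theory.
Local Open Scope ring_scope.

(* The integers n(G, chi_i) are the coordinates of a virtual character beta
   with n(G, phi) = [phi, beta] for every character phi.  By Frobenius
   reciprocity and (ii), (iii), the restriction of beta to any cyclic subgroup
   is a genuine character, so |beta(x)| <= beta(1) for all x in G.  Hence
   sum_i n(G, chi_i)^2 = [beta, beta] <= beta(1)^2 = n(G, Reg_G)^2. *)

Section CharacterAdditiveFunction.

Variables (gT : finGroupType) (G : {group gT}) (f : 'CF(G) -> int).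
Hypothesis fD : forall phi1 phi2 : 'CF(G),
  phi1 \is a character -> phi2 \is a character -> f (phi1 + phi2) = f phi1 + f phi2.

Definition cfOfCharFun : 'CF(G) := \sum_i (f 'chi_i)%:~R *: 'chi_i.

Lemma cfdot_cfOfCharFun_irr i : '[cfOfCharFun, 'chi_i] = (f 'chi_i)%:~R.
Proof.
rewrite cfdot_suml (bigD1 i) //= big1 => [|j ji].
  by rewrite cfdotZl cfdot_irr eqxx mulr1 addr0.
by rewrite cfdotZl cfdot_irr (negbTE ji) mulr0.
Qed.

Lemma cfdot_irr_cfOfCharFun i : '['chi_i, cfOfCharFun] = (f 'chi_i)%:~R.
Proof. by rewrite cfdotC cfdot_cfOfCharFun_irr conj_Creal ?realz. Qed.

Lemma char_fun0 : f 0 = 0.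
Proof.
have := @fD 0 0 (cfun0_char G) (cfun0_char G).
by rewrite addr0 -{1}[f 0]addr0 => /addrI.
Qed.

Lemma char_funE phi : phi \is a character -> (f phi)%:~R = '[phi, cfOfCharFun].
Proof.
case/char_sum_irr=> r ->; elim: r => [|i r IH].
  by rewrite !big_nil char_fun0 cfdot0l.
rewrite !big_cons fD ?irr_char ?rpred_sum // => [|j _]; last exact: irr_char.
by rewrite intrD IH cfdotDl cfdot_irr_cfOfCharFun.
Qed.

Lemma cfnorm_cfOfCharFun : '[cfOfCharFun] = \sum_i ((f 'chi_i) ^+ 2)%:~R.
Proof.
rewrite cfdot_sum_irr; apply: eq_bigr => i _.
by rewrite cfdot_cfOfCharFun_irr conj_Creal ?realz // rmorphXn.
Qed.

Lemma char_fun_cfReg : (f (cfReg G))%:~R = cfOfCharFun 1%g.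
Proof.
rewrite char_funE ?cfReg_char // cfReg_sum cfdot_suml sum_cfunE.
by apply: eq_bigr => i _; rewrite cfdotZl cfdot_irr_cfOfCharFun cfunE mulrC.
Qed.

End CharacterAdditiveFunction.

Arguments cfOfCharFun {gT G} f.
Arguments char_funE {gT G f} fD [phi].
Arguments char_fun_cfReg {gT G f} fD.
Arguments cfnorm_cfOfCharFun {gT G} f.

Lemma cfnorm_le_cf1_sqr {gT : finGroupType} {G : {group gT}} {beta : 'CF(G)} :
  {in G, forall x, `|beta x| <= beta 1%g} -> '[beta] <= beta 1%g ^+ 2.
Proof.
move=> le_beta_1; have beta1_ge0 : 0 <= beta 1%g.
  exact: le_trans (le_beta_1 _ (group1 G)).
rewrite (cfnormE (cfun_onG beta)).
apply: le_trans (_ : #|G|%:R^-1 * \sum_(x in G) beta 1%g ^+ 2 <= _).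
  rewrite ler_wpM2l ?invr_ge0 ?ler0n // ler_sum // => x Gx.
  by rewrite lerXn2r ?nnegrE ?le_beta_1.
rewrite sumr_const -[X in _ * X]mulr_natl mulrA mulVf ?mul1r //.
by rewrite pnatr_eq0 -lt0n cardG_gt0.
Qed.

Lemma norm_cf_le_cf1 {gT : finGroupType} {G : {group gT}} {beta : 'CF(G)} :
    (forall x, x \in G -> 'Res[<[x]>] beta \is a character) ->
  {in G, forall x, `|beta x| <= beta 1%g}.
Proof.
move=> Res_char x Gx; have := char1_ge_norm x (Res_char x Gx).
by rewrite !cfResE ?cycle_id ?group1 ?cycle_subG.
Qed.

Lemma cfRes_char_from_cfInd {gT : finGroupType} {G H : {group gT}}
    {nG : 'CF(G) -> int} (nH : 'CF(H) -> int) {beta : 'CF(G)} :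
    H \subset G ->
    (forall phi, phi \is a character -> (nG phi)%:~R = '[phi, beta]) ->
    (forall phi, phi \is a character -> nG ('Ind[G] phi) = nH phi) ->
    (forall phi, phi \is a character -> 0 <= nH phi) ->
  'Res[H] beta \is a character.
Proof.
move=> sHG nGE nG_Ind nH_ge0; apply/char_sum_irrP.
exists (fun j => `|nH 'chi_j|%N).
rewrite {1}[LHS]cfun_sum_cfdot; apply: eq_bigr => j _; congr (_ *: _).
rewrite cfdotC Frobenius_reciprocity // -nGE ?cfInd_char ?irr_char //.
rewrite nG_Ind ?irr_char // conj_Creal ?realz //.
by rewrite -[in LHS](gez0_abs (nH_ge0 _ (irr_char j))) pmulrn.
Qed.

Theorem theorem5p1p3 (gT : finGroupType) (G : {group gT})
    (n : forall H : {group gT}, 'CF(H) -> int)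
    (hadd_cyc : forall H : {group gT}, H \subset G -> cyclic H ->
       forall phi1 phi2 : 'CF(H), phi1 \is a character -> phi2 \is a character ->
       n H (phi1 + phi2) = n H phi1 + n H phi2)
    (hadd_G : forall phi1 phi2 : 'CF(G), phi1 \is a character -> phi2 \is a character ->
       n G (phi1 + phi2) = n G phi1 + n G phi2)
    (hind : forall H : {group gT}, H \subset G -> cyclic H ->
       forall phi : 'CF(H), phi \is a character ->
       n G ('Ind[G, H] phi) = n H phi)
    (hpos : forall H : {group gT}, H \subset G -> cyclic H ->
       forall phi : 'CF(H), phi \is a character -> 0 <= n H phi) :
  \sum_(i : Iirr G) (n G 'chi_i) ^+ 2 <= (n G (cfReg G)) ^+ 2.
Proof.
(* Hypothesis (i) is only needed for G itself; [hadd_cyc] is unused. *)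
set beta := cfOfCharFun (n G).
have Res_char x : x \in G -> 'Res[<[x]>] beta \is a character.
  move=> Gx; have sXG : <[x]>%g \subset G by rewrite cycle_subG.
  apply: (cfRes_char_from_cfInd (n <[x]>%G) sXG (char_funE hadd_G)).
    exact: hind sXG (cycle_cyclic x).
  exact: hpos sXG (cycle_cyclic x).
rewrite -(ler_int algC) rmorph_sum rmorphXn /= char_fun_cfReg //.
rewrite -cfnorm_cfOfCharFun.
exact: cfnorm_le_cf1_sqr (norm_cf_le_cf1 Res_char).
Qed.
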